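(* Let $S$ take values in a finite set $\mathcal{S}$ with $P(s)>0$ for all $s$, and let $\mathbf{R}$ take values in a finite set $\mathcal{R}$, with joint distribution $P(s,\mathbf{r})$. Let $Q=(Q(\hat{\mathbf{r}}|\mathbf{r}))_{\mathbf{r},\hat{\mathbf{r}}\in\mathcal{R}}$ be a right stochastic matrix (rows and columns both indexed by $\mathcal{R}$ in the same order) that is idempotent ($Q^2=Q$) and has strictly positive diagonal, and let $\hat{\mathbf{R}}$ be the stochastic code with $P(\hat{\mathbf{r}}|s)=\sum_{\mathbf{r}}P(\mathbf{r}|s)Q(\hat{\mathbf{r}}|\mathbf{r})$. Suppose $g$ is a deterministic function such that $\bar{\mathbf{R}}=g(\hat{\mathbf{R}})$ satisfies $I(S;\bar{\mathbf{R}})=I(S;\hat{\mathbf{R}})$. Then $$\Delta I(\mathbf{R},\hat{\mathbf{R}})=\Delta I(\mathbf{R},\bar{\mathbf{R}})=\Delta I_D=\Delta I_{DL},\quad \Delta I(\mathbf{R},\hat{\mathbf{S}})=\Delta I_{LS},\quad \Delta I(\mathbf{R},\hat{S})=\Delta I_B,\quad \Delta A(\mathbf{R},\hat{\mathbf{R}})=\Delta A_B,$$ with all quantities as defined in the context.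
   Context: $I(S;X)=\sum_{s,x}P(s,x)\log\frac{P(s|x)}{P(s)}$ denotes mutual information, with conventions $0\log0=0$. For codes $X,Y$ taking values in $\mathcal{R}$, an optimal decoder constructed with $Y$ and operated on $X$ maps $x$ to $\arg\max_s P(S=s|Y=x)$ (ties broken by a fixed rule); its accuracy above chance is $A^{X}_{Y}=\sum_s P(S=s,\hat S=s)-\max_s P(s)$, where $\hat S$ is the decoder output when the input is $X$. Likewise the sorted list associated with $Y$ and operated on $X$ maps $x$ to the list of stimuli sorted in decreasing order of $P(S=s|Y=x)$ (fixed tie-breaking rule). Encoding-oriented measures: $\Delta I(\mathbf{R},\hat{\mathbf{R}})=I(S;\mathbf{R})-I(S;\hat{\mathbf{R}})$; $\Delta I(\mathbf{R},\bar{\mathbf{R}})=I(S;\mathbf{R})-I(S;\bar{\mathbf{R}})$; $\Delta I(\mathbf{R},\hat{\mathbf{S}})=I(S;\mathbf{R})-I(S;\hat{\mathbf{S}})$ where $\hat{\mathbf{S}}$ is the sorted list constructed with $\hat{\mathbf{R}}$ and operated on $\hat{\mathbf{R}}$; $\Delta I(\mathbf{R},\hat S)=I(S;\mathbf{R})-I(S;\hat S)$ where $\hat S$ is the optimal decoder output constructed with $\hat{\mathbf{R}}$ and operated on $\hat{\mathbf{R}}$; $\Delta A(\mathbf{R},\hat{\mathbf{R}})=A^{\mathbf{R}}_{\mathbf{R}}-A^{\hat{\mathbf{R}}}_{\hat{\mathbf{R}}}$. Decoding-oriented measures: $\Delta I_D=\sum_{s,\mathbf{r}}P(s,\mathbf{r})\ln\frac{P(s|\mathbf{r})}{P(S=s|\hat{\mathbf{R}}=\mathbf{r})}$;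 $\Delta I_{DL}=\min_{\theta\in\mathbb{R}}\sum_{s,\mathbf{r}}P(s,\mathbf{r})\ln\frac{P(s|\mathbf{r})}{P(s|\hat{\mathbf{R}}=\mathbf{r},\theta)}$, where $P(s|\hat{\mathbf{r}},\theta)$ is proportional (normalized over $s$) to: $P(s)$ if there exist $s',\bar{\mathbf{r}}$ with $P(\mathbf{R}=\bar{\mathbf{r}}|S=s')>P(\hat{\mathbf{R}}=\bar{\mathbf{r}}|S=s')=0$; $0$ if $P(\hat{\mathbf{R}}=\hat{\mathbf{r}}|S=s)=P(\mathbf{R}=\hat{\mathbf{r}}|S=s)=0$ holds for this $s$ but not for all stimuli; and $P(s)P(\hat{\mathbf{R}}=\hat{\mathbf{r}}|S=s)^{\theta}$ otherwise; $\Delta I_{LS}=I(S;\mathbf{R})-I(S;\mathbf{L})$ where $\mathbf{L}$ is the sorted list constructed with $\hat{\mathbf{R}}$ and operated on $\mathbf{R}$; $\Delta I_B=I(S;\mathbf{R})-I(S;\tilde S)$ where $\tilde S$ is the optimal decoder output constructed with $\hat{\mathbf{R}}$ and operated on $\mathbf{R}$; $\Delta A_B=A^{\mathbf{R}}_{\mathbf{R}}-A^{\mathbf{R}}_{\hat{\mathbf{R}}}$ (decoder constructed with $\hat{\mathbf{R}}$, operated on $\mathbf{R}$). *)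

From HB Require Import structures.
From mathcomp Require Import all_boot all_order all_algebra.
From mathcomp Require Import all_classical all_reals all_analysis.
Set Implicit Arguments. Unset Strict Implicit. Unset Printing Implicit Defensive.
Import Order.TTheory GRing.Theory Num.Theory.
Local Open Scope ring_scope.

(* A "code" is given by its joint distribution with the stimulus:
   J : St -> X -> R, J s x = P(S = s, X = x). *)

Definition margS (R : realType) (St X : finType) (J : St -> X -> R) (s : St) : R :=
  \sum_(x : X) J s x.

Definition margX (R : realType) (St X : finType) (J : St -> X -> R) (x : X) : R :=
  \sum_(s : St) J s x.

(* posterior P(S = s | X = x)  (equal to 0 when P(X = x) = 0) *)
Definition post (R : realType) (St X : finType) (J : St -> X -> R) (x : X) (s : St) : R :=
  J s x / margX J x.

Definition condS (R : realType) (St X : finType) (J : St -> X -> R) (s : St) (x : X) : R :=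
  J s x / margS J s.

Definition MI (R : realType) (St X : finType) (J : St -> X -> R) : R :=
  \sum_(s : St) \sum_(x : X)
     (if J s x == 0 then 0 else J s x * ln (post J x s / margS J s)).

Definition chanJ (R : realType) (St Rsp : finType) (P : St -> Rsp -> R)
  (Q : Rsp -> Rsp -> R) (s : St) (rh : Rsp) : R :=
  \sum_(r : Rsp) P s r * Q r rh.

Definition pushJ (R : realType) (St X B : finType) (J : St -> X -> R) (g : X -> B)
  (s : St) (b : B) : R :=
  \sum_(x : X | g x == b) J s x.

(* Tie-breaking rule: a fixed priority [prio] on stimuli (smaller first);
   remaining ties (equal priority) are broken by the enumeration order of St,
   since [sort] is stable. *)
Definition rank_rel (R : realType) (St X : finType) (prio : St -> nat)
  (Y : St -> X -> R) (x : X) : rel St :=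
  fun a b => (post Y x b < post Y x a) ||
             ((post Y x a == post Y x b) && (prio a <= prio b)%N).

Lemma sorted_list_size (R : realType) (St X : finType) (prio : St -> nat)
  (Y : St -> X -> R) (x : X) :
  size (sort (rank_rel prio Y x) (enum St)) == #|St|.
Proof. by rewrite size_sort cardT. Qed.

Definition sortedL (R : realType) (St X : finType) (prio : St -> nat)
  (Y : St -> X -> R) (x : X) : #|St|.-tuple St :=
  Tuple (sorted_list_size prio Y x).

(* optimal (MAP) decoder constructed with Y, evaluated at x : the top of the
   sorted list, i.e. argmax_s P(S = s | Y = x) with the fixed tie-breaking rule.
   (Always [Some _] since St is nonempty whenever a distribution exists.) *)
Definition decode (R : realType) (St X : finType) (prio : St -> nat)
  (Y : St -> X -> R) (x : X) : option St :=
  ohead (sortedL prio Y x).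

(* joint distribution of (S, sorted list constructed with Y and operated on X) *)
Definition listJ (R : realType) (St X : finType) (prio : St -> nat)
  (Y Xc : St -> X -> R) : St -> #|St|.-tuple St -> R :=
  pushJ Xc (sortedL prio Y).

(* joint distribution of (S, decoder constructed with Y and operated on X) *)
Definition decJ (R : realType) (St X : finType) (prio : St -> nat)
  (Y Xc : St -> X -> R) : St -> option St -> R :=
  pushJ Xc (decode prio Y).

Definition accuracy (R : realType) (St X : finType) (prio : St -> nat)
  (Y Xc : St -> X -> R) : R :=
  \sum_(s : St) decJ prio Y Xc s (Some s) - \big[Num.max/0]_(s : St) margS Xc s.

Definition DeltaID (R : realType) (St Rsp : finType) (P Ph : St -> Rsp -> R) : R :=
  \sum_(s : St) \sum_(r : Rsp)
     (if P s r == 0 then 0 else P s r * ln (post P r s / post Ph r s)).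

Definition DLweight (R : realType) (St Rsp : finType) (P Ph : St -> Rsp -> R)
  (theta : R) (s : St) (rh : Rsp) : R :=
  let zero2 := fun s' => (condS Ph s' rh == 0) && (condS P s' rh == 0) in
  if [exists s', exists rb, (condS Ph s' rb == 0) && (0 < condS P s' rb)]
  then margS P s
  else if zero2 s && ~~ [forall s', zero2 s']
  then 0
  else margS P s * condS Ph s rh `^ theta.

Definition DLpost (R : realType) (St Rsp : finType) (P Ph : St -> Rsp -> R)
  (theta : R) (s : St) (rh : Rsp) : R :=
  DLweight P Ph theta s rh / \sum_(s' : St) DLweight P Ph theta s' rh.

(* the function of theta minimized in Delta I_DL *)
Definition DLobj (R : realType) (St Rsp : finType) (P Ph : St -> Rsp -> R)
  (theta : R) : R :=
  \sum_(s : St) \sum_(r : Rsp)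
     (if P s r == 0 then 0 else P s r * ln (post P r s / DLpost P Ph theta s r)).

From Pilot Require Import Defs.
From HB Require Import structures.
From mathcomp Require Import all_boot all_order all_algebra.
From mathcomp Require Import all_classical all_reals all_analysis.
From mathcomp Require Import lra.
Set Implicit Arguments. Unset Strict Implicit. Unset Printing Implicit Defensive.
Import Order.TTheory GRing.Theory Num.Theory.
Local Open Scope ring_scope.

(* An idempotent stochastic matrix with positive diagonal is block diagonal:
   [0 < Q a b] is an equivalence relation on responses and, inside a block,
   every row of [Q] is the same distribution, of full support on the block.
   So [P(S = s, Rhat = rh)] is [Q rh rh] times [P(S = s, R in the block of rh)],
   and the posterior [P(s | Rhat = rh)], the sorted lists and decoders built from
   it, and the weights of [Delta I_DL] (up to a factor common to all [s]) are
   all constant on blocks.  Averaging a block-invariant function against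
   [Rhat] or against [R] gives the same result, which identifies each
   encoding-oriented measure with its decoding-oriented counterpart.  The
   bound [Delta I_D <= DLobj theta] is [ln x <= x - 1] (Gibbs' inequality),
   with equality at [theta = 1]. *)

Lemma if_eq0_mul (R : numDomainType) (x y : R) :
  (if x == 0 then 0 else x * y) = x * y.
Proof. by case: eqP => [->|]; rewrite ?mul0r. Qed.

Lemma ler_sum_term (R : numDomainType) (I : finType) (P : pred I) (F : I -> R) (i : I) :
  P i -> (forall j, P j -> 0 <= F j) -> F i <= \sum_(j | P j) F j.
Proof. by move=> Pi F_ge0; rewrite (bigD1 i) //= lerDl sumr_ge0 // => j /andP[/F_ge0]. Qed.

Lemma ln_le_subr1 (R : realType) (x : R) : 0 < x -> ln x <= x - 1.
Proof. by move=> x_gt0; have := @le_ln1Dx R (x - 1); rewrite [1 + _]addrC subrK; apply; lra. Qed.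

Section Posterior.
Variables (R : realType) (St X : finType) (J : St -> X -> R).
Hypothesis J_ge0 : forall s x, 0 <= J s x.

Lemma margX_ge0 x : 0 <= margX J x.
Proof. exact: sumr_ge0. Qed.

Lemma ler_margX s x : J s x <= margX J x.
Proof. exact: ler_sum_term. Qed.

Lemma post_gt0 s x : 0 < J s x -> 0 < post J x s.
Proof. by move=> Jsx; rewrite divr_gt0 // (lt_le_trans Jsx (ler_margX s x)). Qed.

Lemma condS_eq0 s x : 0 < margS J s -> (condS J s x == 0) = (J s x == 0).
Proof. by move=> margS_gt0; rewrite mulf_eq0 invr_eq0 (gt_eqF margS_gt0) orbF. Qed.

Lemma mul_div_post_le s x q : 0 <= q -> J s x * (q / post J x s) <= margX J x * q.
Proof.
move=> q_ge0; have [->|Jsx] := eqVneq (J s x) 0.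
  by rewrite mul0r mulr_ge0 // margX_ge0.
have margX_neq0 : margX J x != 0.
  by rewrite gt_eqF // (lt_le_trans _ (ler_margX s x)) // lt0r Jsx J_ge0.
by rewrite /post invf_div mulrCA [J s x * _]mulrCA divff // mulr1 mulrC.
Qed.

End Posterior.

Lemma sum_DLpost_le1 (R : realType) (St Rsp : finType) (P Ph : St -> Rsp -> R) theta r :
  \sum_s DLpost P Ph theta s r <= 1.
Proof.
rewrite /DLpost -mulr_suml.
by have [->|sum_neq0] := eqVneq (\sum_s DLweight P Ph theta s r) 0; rewrite ?invr0 ?mulr0 ?divff.
Qed.

Section IdempotentChannel.
Variables (R : realType) (Rsp : finType) (Q : Rsp -> Rsp -> R).
Hypothesis Q_ge0 : forall r rh, 0 <= Q r rh.
Hypothesis Q_row1 : forall r, \sum_rh Q r rh = 1.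
Hypothesis Q_idem : forall r r2, \sum_r1 Q r r1 * Q r1 r2 = Q r r2.
Hypothesis Q_diag_gt0 : forall r, 0 < Q r r.

Lemma Q_gt0E r rh : (0 < Q r rh) = (Q r rh != 0).
Proof. by rewrite lt_def Q_ge0 andbT. Qed.

Lemma Q_le0 r rh : Q r rh <= 0 -> Q r rh = 0.
Proof. by move=> Q_le0; apply/le_anti; rewrite Q_le0 Q_ge0. Qed.

Lemma Q_supp_trans a b c : 0 < Q a b -> 0 < Q b c -> 0 < Q a c.
Proof.
move=> Qab Qbc; rewrite -Q_idem.
by apply: lt_le_trans (mulr_gt0 Qab Qbc) (ler_sum_term _ _) => // r1; rewrite mulr_ge0.
Qed.

Lemma Q_row_closed1 (A : pred Rsp) :
  (forall x z, A x -> 0 < Q x z -> A z) -> forall x, A x -> \sum_(z | A z) Q x z = 1.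
Proof.
move=> closedA x Ax; rewrite -(Q_row1 x) [RHS](bigID A) /=.
rewrite [X in _ = _ + X]big1 ?addr0 // => z; apply: contraNeq.
by rewrite -Q_gt0E; apply: closedA.
Qed.

Lemma Q_supp_sym a b : 0 < Q a b -> 0 < Q b a.
Proof.
move=> Qab; rewrite Q_gt0E; apply/eqP => Qba0.
pose A x := 0 < Q b x.
have A_mass1 := Q_row_closed1 (fun x z (Ax : A x) => Q_supp_trans Ax).
have mass_ge0 x : 0 <= \sum_(z | A z) Q x z by rewrite sumr_ge0.
(* [Q = Q^2] preserves the mass row [a] puts on the closed set [A], and the
   terms indexed in [A] already account for all of it *)
have : \sum_(x | ~~ A x) Q a x * \sum_(z | A z) Q x z = 0.
  have /eqP : \sum_(z | A z) Q a z = \sum_x Q a x * \sum_(z | A z) Q x z.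
    under eq_bigr => z _ do rewrite -Q_idem.
    by rewrite exchange_big; apply: eq_bigr => x _; rewrite mulr_sumr.
  rewrite [X in _ == X](bigID A) /=.
  have -> : \sum_(x | A x) Q a x * \sum_(z | A z) Q x z = \sum_(x | A x) Q a x.
    by apply: eq_bigr => x Ax; rewrite A_mass1 ?mulr1.
  by move/eqP/esym; rewrite -[X in _ = X]addr0 => /addrI.
have nAa : ~~ A a by rewrite /A Qba0 ltxx.
move/psumr_eq0P => /(_ (fun x _ => mulr_ge0 (Q_ge0 a x) (mass_ge0 x)) a nAa) /eqP.
rewrite mulf_eq0 gt_eqF //= gt_eqF //.
by apply: lt_le_trans Qab (ler_sum_term _ _) => //; rewrite /A Q_diag_gt0.
Qed.

Lemma Q_eq_diag x z : 0 < Q x z -> Q x z = Q z z.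
Proof.
move=> Qxz; have [x0 _ x0_max] := @arg_maxP _ _ Rsp z xpredT (Q ^~ z) isT.
(* in the row of a maximizer [x0] of column [z], [Q = Q^2] averages that
   column into its maximum, so the column is constant on the row's support *)
have col_const w : 0 < Q x0 w -> Q w z = Q x0 z.
  move=> Qx0w; have : \sum_w Q x0 w * (Q x0 z - Q w z) = 0.
    under eq_bigr do rewrite mulrBr.
    by rewrite sumrB -mulr_suml Q_row1 mul1r Q_idem subrr.
  have gap_ge0 v : 0 <= Q x0 v * (Q x0 z - Q v z).
    by rewrite mulr_ge0 // subr_ge0; exact: x0_max.
  move/psumr_eq0P => /(_ (fun v _ => gap_ge0 v) w isT) /eqP.
  by rewrite mulf_eq0 subr_eq0 gt_eqF //= => /eqP.
have Qx0z : 0 < Q x0 z by apply: lt_le_trans (Q_diag_gt0 z) (x0_max z isT).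
rewrite col_const; last exact: Q_supp_trans Qx0z (Q_supp_sym Qxz).
by rewrite col_const.
Qed.

Lemma Q_scale r a b : 0 < Q a b -> Q r a = Q a a / Q b b * Q r b.
Proof.
move=> Qab; have [Qrb|/Q_le0 Qrb0] := ltP 0 (Q r b).
  have Qra := Q_supp_trans Qrb (Q_supp_sym Qab).
  by rewrite (Q_eq_diag Qra) (Q_eq_diag Qrb) divfK // gt_eqF.
have [Qra|/Q_le0->] := ltP 0 (Q r a); last by rewrite Qrb0 mulr0.
by have := Q_supp_trans Qra Qab; rewrite Qrb0 ltxx.
Qed.

Definition Q_invariant (T : Type) (f : Rsp -> T) := forall a b, 0 < Q a b -> f a = f b.

Lemma sum_chan_invariant (p f : Rsp -> R) : Q_invariant f ->
  \sum_rh (\sum_r p r * Q r rh) * f rh = \sum_r p r * f r.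
Proof.
move=> f_inv; under eq_bigr do rewrite mulr_suml.
rewrite exchange_big; apply: eq_bigr => r _.
transitivity (\sum_rh p r * (Q r rh * f r)); last by rewrite -mulr_sumr -mulr_suml Q_row1 mul1r.
apply: eq_bigr => rh _; rewrite -mulrA; congr (_ * _).
by have [/f_inv<- //|/Q_le0->] := ltP 0 (Q r rh); rewrite !mul0r.
Qed.

Section ChannelCode.
Variables (St : finType) (P : St -> Rsp -> R).
Hypothesis P_ge0 : forall s r, 0 <= P s r.
Hypothesis P_sum1 : \sum_s \sum_r P s r = 1.
Hypothesis margS_gt0 : forall s, 0 < margS P s.

Local Notation Ph := (chanJ P Q).

Lemma chanJ_ge0 s r : 0 <= Ph s r.
Proof. by rewrite sumr_ge0 // => r' _; rewrite mulr_ge0. Qed.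

Lemma chanJ_gt0 s r : 0 < P s r -> 0 < Ph s r.
Proof.
move=> Psr; apply: lt_le_trans (mulr_gt0 Psr (Q_diag_gt0 r)) (ler_sum_term _ _) => // r' _.
by rewrite mulr_ge0.
Qed.

Lemma margS_chanJ s : margS Ph s = margS P s.
Proof.
rewrite /margS /chanJ exchange_big; apply: eq_bigr => r _.
by rewrite -mulr_sumr Q_row1 mulr1.
Qed.

Lemma chanJ_scale s a b : 0 < Q a b -> Ph s a = Q a a / Q b b * Ph s b.
Proof.
by move=> Qab; rewrite /chanJ mulr_sumr; apply: eq_bigr => r _; rewrite (Q_scale r Qab) mulrCA.
Qed.

Lemma post_chanJ_invariant s : Q_invariant (post Ph ^~ s).
Proof.
move=> a b Qab; rewrite /post /margX (chanJ_scale s Qab).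
under eq_bigr do rewrite (chanJ_scale _ Qab).
by rewrite -mulr_sumr -mulf_div divff ?mul1r // mulf_neq0 ?invr_eq0 ?gt_eqF.
Qed.

Lemma pushJ_chanJ (T : finType) (h : Rsp -> T) : Q_invariant h -> pushJ Ph h = pushJ P h.
Proof.
move=> h_inv; apply/funext => s; apply/funext => t; rewrite /pushJ big_mkcond [RHS]big_mkcond /=.
have ind_inv : Q_invariant (fun r => ((h r == t)%:R : R)) by move=> a b /h_inv->.
under eq_bigr do rewrite -mulrb -mulr_natr.
under [RHS]eq_bigr do rewrite -mulrb -mulr_natr.
exact: sum_chan_invariant.
Qed.

Lemma MI_chanJ : MI Ph = \sum_s \sum_r P s r * ln (post Ph r s / margS P s).
Proof.
apply: eq_bigr => s _; under eq_bigr do rewrite if_eq0_mul margS_chanJ.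
by apply: sum_chan_invariant => a b /(post_chanJ_invariant s)->.
Qed.

Lemma MI_sub_MI_chanJ : MI P - MI Ph = DeltaID P Ph.
Proof.
rewrite MI_chanJ /MI /DeltaID -sumrB; apply: eq_bigr => s _.
rewrite -sumrB; apply: eq_bigr => r _; rewrite !if_eq0_mul -mulrBr.
have := P_ge0 s r; rewrite le_eqVlt => /predU1P[<-|Psr]; first by rewrite !mul0r.
move: (post_gt0 P_ge0 Psr) (post_gt0 chanJ_ge0 (chanJ_gt0 Psr)) (margS_gt0 s).
move: (post P r s) (post Ph r s) (margS P s) => x y z x_gt0 y_gt0 z_gt0.
by rewrite !ln_div ?posrE //; congr (_ * _); lra.
Qed.

Lemma chanJ_eq0 s r : Ph s r = 0 -> P s r = 0.
Proof. by apply: contra_eq => Psr; rewrite gt_eqF // chanJ_gt0 // lt0r Psr P_ge0. Qed.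

Lemma DLweight_chanJ theta s rh : DLweight P Ph theta s rh =
  if (Ph s rh == 0) && ~~ [forall s', Ph s' rh == 0] then 0
  else margS P s * condS Ph s rh `^ theta.
Proof.
have condS_chanJ_eq0 s' r : (condS Ph s' r == 0) = (Ph s' r == 0).
  by rewrite condS_eq0 ?margS_chanJ.
have zero2E s' r : (condS Ph s' r == 0) && (condS P s' r == 0) = (Ph s' r == 0).
  rewrite condS_chanJ_eq0 condS_eq0 //.
  by apply/andP/idP => [[]//|/[dup] /eqP/chanJ_eq0->]; rewrite eqxx.
have supp_incl : [exists s', exists rb, (condS Ph s' rb == 0) && (0 < condS P s' rb)] = false.
  apply/existsPn => s'; apply/existsPn => rb; rewrite condS_chanJ_eq0.
  by apply/negP => /andP[/eqP/chanJ_eq0 P0]; rewrite /condS P0 mul0r ltxx.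
by rewrite /DLweight /= supp_incl zero2E (eq_forallb (zero2E ^~ rh)).
Qed.

Lemma DLweight_chanJ_ge0 theta s r : 0 <= DLweight P Ph theta s r.
Proof. by rewrite DLweight_chanJ; case: ifP => // _; rewrite mulr_ge0 ?powR_ge0 ?ltW. Qed.

Lemma DLpost_chanJ_ge0 theta s r : 0 <= DLpost P Ph theta s r.
Proof. by rewrite divr_ge0 ?sumr_ge0 // => *; exact: DLweight_chanJ_ge0. Qed.

Lemma DLpost_chanJ_gt0 theta s r : 0 < P s r -> 0 < DLpost P Ph theta s r.
Proof.
move=> Psr; have Phsr := chanJ_gt0 Psr.
have w_gt0 : 0 < DLweight P Ph theta s r.
  by rewrite DLweight_chanJ gt_eqF //= mulr_gt0 // powR_gt0 // divr_gt0 // margS_chanJ.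
rewrite divr_gt0 //.
apply: lt_le_trans w_gt0 (ler_sum_term (F := DLweight P Ph theta ^~ r) _ _) => // s' _.
exact: DLweight_chanJ_ge0.
Qed.

Lemma DLweight_chanJ_scale theta s a b : 0 < Q a b ->
  DLweight P Ph theta s a = (Q a a / Q b b) `^ theta * DLweight P Ph theta s b.
Proof.
move=> Qab; have lam_gt0 : 0 < Q a a / Q b b by rewrite divr_gt0.
have eq0E s' : (Ph s' a == 0) = (Ph s' b == 0).
  by rewrite (chanJ_scale s' Qab) mulf_eq0 (gt_eqF lam_gt0).
rewrite !DLweight_chanJ eq0E (eq_forallb eq0E); case: ifP => _; first by rewrite mulr0.
have condS_ge0 : 0 <= condS Ph s b by rewrite divr_ge0 ?chanJ_ge0 // margS_chanJ ltW.
by rewrite /condS (chanJ_scale s Qab) -mulrA powRM ?(ltW lam_gt0) // mulrCA.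
Qed.

Lemma DLpost_chanJ_invariant theta s : Q_invariant (DLpost P Ph theta s).
Proof.
move=> a b Qab; rewrite /DLpost (DLweight_chanJ_scale _ _ Qab).
under eq_bigr do rewrite (DLweight_chanJ_scale _ _ Qab).
by rewrite -mulr_sumr -mulf_div divff ?mul1r // gt_eqF // powR_gt0 // divr_gt0.
Qed.

Lemma DeltaID_sub_DLobj_le theta : DeltaID P Ph - DLobj P Ph theta <=
  \sum_s \sum_r P s r * (DLpost P Ph theta s r / post Ph r s) - 1.
Proof.
rewrite /DeltaID /DLobj -[in X in _ <= X]P_sum1 -!sumrB; apply: ler_sum => s _.
rewrite -!sumrB; apply: ler_sum => r _; rewrite !if_eq0_mul.
have := P_ge0 s r; rewrite le_eqVlt => /predU1P[<-|Psr]; first by rewrite !mul0r subrr.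
move: (post_gt0 P_ge0 Psr) (post_gt0 chanJ_ge0 (chanJ_gt0 Psr)) (DLpost_chanJ_gt0 theta Psr).
move: (post P r s) (post Ph r s) (DLpost P Ph theta s r) => x y z x_gt0 y_gt0 z_gt0.
rewrite -mulrBr -[X in _ <= _ - X]mulr1 -mulrBr ler_pM2l //.
have := ln_le_subr1 (divr_gt0 z_gt0 y_gt0).
by rewrite !ln_div ?posrE //; move: (z / y) => t; lra.
Qed.

Lemma sum_margX_chanJ : \sum_r margX Ph r = 1.
Proof. by rewrite exchange_big -P_sum1; apply: eq_bigr => s _; exact: margS_chanJ. Qed.

Lemma sum_DLpost_div_post_le1 theta :
  \sum_s \sum_r P s r * (DLpost P Ph theta s r / post Ph r s) <= 1.
Proof.
have ratio_inv s : Q_invariant (fun r => DLpost P Ph theta s r / post Ph r s).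
  by move=> a b Qab; rewrite (DLpost_chanJ_invariant _ _ Qab) (post_chanJ_invariant _ Qab).
under eq_bigr do rewrite -(sum_chan_invariant _ (ratio_inv _)).
apply: (@le_trans _ _ (\sum_s \sum_r margX Ph r * DLpost P Ph theta s r)).
  apply: ler_sum => s _; apply: ler_sum => r _.
  exact: mul_div_post_le chanJ_ge0 _ _ _ (DLpost_chanJ_ge0 _ _ _).
rewrite exchange_big -sum_margX_chanJ; apply: ler_sum => r _.
by rewrite -mulr_sumr; apply: ler_piMr; [exact: (margX_ge0 chanJ_ge0) | exact: sum_DLpost_le1].
Qed.

Lemma DeltaID_le_DLobj theta : DeltaID P Ph <= DLobj P Ph theta.
Proof. by have := DeltaID_sub_DLobj_le theta; have := sum_DLpost_div_post_le1 theta; lra. Qed.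

Lemma DLpost_chanJ1 s r : DLpost P Ph 1 s r = post Ph r s.
Proof.
have w1 s' : DLweight P Ph 1 s' r = Ph s' r.
  rewrite DLweight_chanJ; case: ifP => [/andP[/eqP-> _] //|_].
  rewrite powRr1; last by rewrite divr_ge0 ?chanJ_ge0 // margS_chanJ ltW.
  by rewrite /condS margS_chanJ mulrCA divff ?mulr1 ?gt_eqF.
by rewrite /DLpost w1; under eq_bigr do rewrite w1.
Qed.

Lemma DLobj_chanJ1 : DLobj P Ph 1 = DeltaID P Ph.
Proof. by apply: eq_bigr => s _; under eq_bigr do rewrite DLpost_chanJ1. Qed.

Lemma sortedL_chanJ_invariant (prio : St -> nat) : Q_invariant (sortedL prio Ph).
Proof.
move=> a b Qab; apply: val_inj => /=; congr sort.
by apply/funext => u; apply/funext => v; rewrite /rank_rel !(post_chanJ_invariant _ Qab).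
Qed.

Lemma listJ_chanJ prio : listJ prio Ph Ph = listJ prio Ph P.
Proof. exact/pushJ_chanJ/sortedL_chanJ_invariant. Qed.

Lemma decJ_chanJ prio : decJ prio Ph Ph = decJ prio Ph P.
Proof.
apply: pushJ_chanJ => a b /(sortedL_chanJ_invariant prio).
by rewrite /Defs.decode => ->.
Qed.

Lemma accuracy_chanJ prio : accuracy prio Ph Ph = accuracy prio Ph P.
Proof.
rewrite /accuracy decJ_chanJ; congr (_ - _).
by apply: eq_bigr => s _; exact: margS_chanJ.
Qed.

End ChannelCode.

End IdempotentChannel.

Theorem theorem6 (R : realType) (St Rsp B : finType)
  (P : St -> Rsp -> R) (Q : Rsp -> Rsp -> R) (g : Rsp -> B) (prio : St -> nat)
  (HP0 : forall s r, 0 <= P s r)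
  (HP1 : \sum_(s : St) \sum_(r : Rsp) P s r = 1)
  (HPs : forall s, 0 < margS P s)
  (HQ0 : forall r rh, 0 <= Q r rh)
  (HQ1 : forall r, \sum_(rh : Rsp) Q r rh = 1)
  (HQidem : forall r r2, \sum_(r1 : Rsp) Q r r1 * Q r1 r2 = Q r r2)
  (HQdiag : forall r, 0 < Q r r)
  (Hg : MI (pushJ (chanJ P Q) g) = MI (chanJ P Q)) :
  let Ph := chanJ P Q in
  let Pb := pushJ Ph g in
  (MI P - MI Ph = MI P - MI Pb)
  /\ (MI P - MI Pb = DeltaID P Ph)
  /\ ((forall theta : R, DeltaID P Ph <= DLobj P Ph theta)
      /\ (exists theta : R, DLobj P Ph theta = DeltaID P Ph))
  /\ (MI P - MI (listJ prio Ph Ph) = MI P - MI (listJ prio Ph P))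
  /\ (MI P - MI (decJ prio Ph Ph) = MI P - MI (decJ prio Ph P))
  /\ (accuracy prio P P - accuracy prio Ph Ph = accuracy prio P P - accuracy prio Ph P).
Proof.
move=> Ph Pb; rewrite /Pb /Ph Hg.
split; first by [].
split; first exact: MI_sub_MI_chanJ.
split; first by split=> [theta|]; [exact: DeltaID_le_DLobj | exists 1; exact: DLobj_chanJ1].
split; first by rewrite listJ_chanJ.
split; first by rewrite decJ_chanJ.
by rewrite accuracy_chanJ.
Qed.
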